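(* Let $\mathbb{F}$ be an algebraically closed field with $\mathrm{char}\,\mathbb{F}=2$, and let $\mathcal{A}$ be a (not necessarily unital) subalgebra of $\mathbf{O}$ with $\mathcal{A}\subseteq\mathbf{O}_0$ and $\dim\mathcal{A}\ge2$. Then there exists $g\in{\rm G}_2$ such that either (a) $\{1_{\mathbf{O}},\mathbf{u}_1\}\subseteq g\mathcal{A}$; or (b) $\{\mathbf{u}_1,\mathbf{v}_2\}\subseteq g\mathcal{A}$ and $1_{\mathbf{O}}\notin g\mathcal{A}$.
   Context: The split octonion algebra $\mathbf{O}$ is the 8-dimensional $\mathbb{F}$-vector space of formal matrices $a=\begin{pmatrix}\alpha&\mathbf{u}\\ \mathbf{v}&\beta\end{pmatrix}$ with $\alpha,\beta\in\mathbb{F}$, $\mathbf{u},\mathbf{v}\in\mathbb{F}^3$, with multiplication $\begin{pmatrix}\alpha&\mathbf{u}\\ \mathbf{v}&\beta\end{pmatrix}\begin{pmatrix}\alpha'&\mathbf{u}'\\ \mathbf{v}'&\beta'\end{pmatrix}=\begin{pmatrix}\alpha\alpha'+\mathbf{u}\cdot\mathbf{v}'&\alpha\mathbf{u}'+\beta'\mathbf{u}-\mathbf{v}\times\mathbf{v}'\\ \alpha'\mathbf{v}+\beta\mathbf{v}'+\mathbf{u}\times\mathbf{u}'&\beta\beta'+\mathbf{v}\cdot\mathbf{u}'\end{pmatrix}$ (dot product and cross product on $\mathbb{F}^3$). Trace $\mathrm{tr}(a)=\alpha+\beta$, $\mathbf{O}_0=\{a\in\mathbf{O}\mid\mathrm{tr}(a)=0\}$.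 With $\mathbf{c}_1,\mathbf{c}_2,\mathbf{c}_3$ the standard basis of $\mathbb{F}^3$: $\mathbf{u}_i$ has $\mathbf{u}=\mathbf{c}_i$ and all else $0$, $\mathbf{v}_i$ has $\mathbf{v}=\mathbf{c}_i$ and all else $0$, and $1_{\mathbf{O}}$ has $\alpha=\beta=1$, $\mathbf{u}=\mathbf{v}=0$. ${\rm G}_2=\mathrm{Aut}(\mathbf{O})$. *)

From HB Require Import structures.
From mathcomp Require Import all_boot all_order all_algebra.
Set Implicit Arguments. Unset Strict Implicit. Unset Printing Implicit Defensive.
Import GRing.Theory.
Local Open Scope ring_scope.

(* The split octonions over F, realised as the 8-dimensional coordinate space
   'rV[F]_8.  Coordinate layout of a = (alpha u ; v beta):
     index 0      : alpha
     indices 1..3 : u = (u_1,u_2,u_3)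
     indices 4..6 : v = (v_1,v_2,v_3)
     index 7      : beta                                                     *)
Section Octonions.
Variable F : fieldType.

Definition Oct := 'rV[F]_8.

Definition oalpha (x : Oct) : F := x 0 (inord 0).
Definition obeta  (x : Oct) : F := x 0 (inord 7).
Definition ou (x : Oct) : 'rV[F]_3 := \row_(i < 3) x 0 (inord i.+1).
Definition ov (x : Oct) : 'rV[F]_3 := \row_(i < 3) x 0 (inord (i + 4)).

Definition mkO (a : F) (u v : 'rV[F]_3) (b : F) : Oct :=
  \row_(i < 8) (if (i : nat) == 0%N then a
               else if (i < 4)%N then u 0 (inord i.-1)
               else if (i < 7)%N then v 0 (inord (i - 4))
               else b).

Definition dot3 (u v : 'rV[F]_3) : F := \sum_(i < 3) u 0 i * v 0 i.
Definition cross3 (u v : 'rV[F]_3) : 'rV[F]_3 :=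
  \row_(i < 3) (u 0 (inord ((i + 1) %% 3)) * v 0 (inord ((i + 2) %% 3))
              - u 0 (inord ((i + 2) %% 3)) * v 0 (inord ((i + 1) %% 3))).

(* Zorn vector-matrix multiplication *)
Definition omul (x y : Oct) : Oct :=
  mkO (oalpha x * oalpha y + dot3 (ou x) (ov y))
      (oalpha x *: ou y + obeta y *: ou x - cross3 (ov x) (ov y))
      (oalpha y *: ov x + obeta x *: ov y + cross3 (ou x) (ou y))
      (obeta x * obeta y + dot3 (ov x) (ou y)).

Definition otr (x : Oct) : F := oalpha x + obeta x.

(* standard basis vectors c_i of F^3 (i = 1,2,3 in the paper; 0-based here) *)
Definition cvec (i : nat) : 'rV[F]_3 := \row_(j < 3) (if (j : nat) == i then 1 else 0).

Definition oone : Oct := mkO 1 0 0 1.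
Definition ou_ (i : nat) : Oct := mkO 0 (cvec i.-1) 0 0.
Definition ov_ (i : nat) : Oct := mkO 0 0 (cvec i.-1) 0.

Definition isG2 (g : 'End(Oct)) : Prop :=
  lker g = 0%VS /\ forall x y, g (omul x y) = omul (g x) (g y).

Definition is_subalgebra (A : {vspace Oct}) : Prop :=
  forall x y, x \in A -> y \in A -> omul x y \in A.

Definition in_O0 (A : {vspace Oct}) : Prop :=
  forall x, x \in A -> otr x = 0.

End Octonions.

(* If 1 lies in A, pick x in A off the line F1.  Since tr x = 0 and char F = 2,
   x^2 = n(x) 1 and (x + r 1)^2 = x^2 + r^2 1 vanishes for r a square root of
   n(x): A contains a nonzero element of square zero.  If 1 does not lie in A,
   then x^2 = -n(x) 1 forces x^2 = 0 for every x in A, so A is anticommutative,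
   and with the left alternative law it contains independent a, b with
   ab = ba = 0.
   G2 acts transitively on the nonzero elements of square zero: shears kill
   the scalar part, the flip makes u nonzero, transvections of SL_3 normalise u
   to c_1 and a last shear kills v.  So we may take a = u_1; then
   b = s u_1 + p v_2 + q v_3, and the transvections of the SL_2 acting on
   (v_2, v_3), which fix u_1, bring p v_2 + q v_3 to v_2. *)
From HB Require Import structures.
From mathcomp Require Import all_boot all_order all_algebra.
From mathcomp Require Import ring.
Set Implicit Arguments. Unset Strict Implicit. Unset Printing Implicit Defensive.
Import GRing.Theory.
Local Open Scope ring_scope.

Definition end_of (K : fieldType) (vT : vectType K) (f : vT -> vT) (f_lin : linear f) :
    'End(vT) :=
  linfun (HB.pack f (GRing.isLinear.Build _ _ _ _ f f_lin) : {linear vT -> vT}).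

Lemma end_ofE (K : fieldType) (vT : vectType K) (f : vT -> vT) (f_lin : linear f) x :
  end_of f_lin x = f x.
Proof. exact: lfunE. Qed.

Lemma memv_notin_line (K : fieldType) (vT : vectType K) (A : {vspace vT}) v :
  (2 <= \dim A)%N -> exists2 x, x \in A & x \notin <[v]>%VS.
Proof.
move=> dimA; apply/subvPn/negP=> /dimvS; rewrite dim_vline.
by move/(leq_trans dimA); case: (v != 0).
Qed.

Lemma closed_sqrt (F : closedFieldType) (c : F) : exists r, r ^+ 2 = c.
Proof.
have [r r2] := @solve_monicpoly F 2 (nth 0 [:: c]) isT.
by exists r; rewrite r2 !big_ord_recl big_ord0 /= mul0r !addr0 mulr1.
Qed.

Lemma exists_dot3 (F : fieldType) (v1 v2 v3 c : F) :
  [|| v1 != 0, v2 != 0 | v3 != 0] -> exists a1 a2 a3, a1 * v1 + a2 * v2 + a3 * v3 = c.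
Proof.
case/or3P=> v0; [exists (c / v1), 0, 0 | exists 0, (c / v2), 0 | exists 0, 0, (c / v3)];
  by rewrite !mul0r ?add0r ?addr0 divfK.
Qed.

Lemma SL2_moves_to_e1 (F : fieldType) (R : F -> F -> F -> F -> Prop) :
  (forall p q p' q' p'' q'', R p q p' q' -> R p' q' p'' q'' -> R p q p'' q'') ->
  (forall p q t, R p q p (q + t * p)) -> (forall p q t, R p q (p + t * q) q) ->
  forall p q, (p != 0) || (q != 0) -> R p q 1 0.
Proof.
move=> R_trans R_down R_up.
have down p q q' : p != 0 -> R p q p q'.
  by move=> p0; have := R_down p q ((q' - q) / p); rewrite divfK // addrC subrK.
have up p p' q : q != 0 -> R p q p' q.
  by move=> q0; have := R_up p q ((p' - p) / q); rewrite divfK // addrC subrK.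
move=> p q /orP[p0 | q0].
- apply: (R_trans _ _ p 1); first exact: down.
  by apply: (R_trans _ _ 1 1); [exact: up (oner_neq0 _) | exact: down (oner_neq0 _)].
- by apply: (R_trans _ _ 1 q); [exact: up | exact: down (oner_neq0 _)].
Qed.

Section Coordinates.
Variable F : fieldType.
Implicit Types (x y : Oct F) (a : F).

(* For k >= 8, [inord k] is 0, so [ocoord x k] is the junk value [ocoord x 0]. *)
Definition ocoord x (k : nat) : F := x 0 (inord k).

Definition oct_of (f : nat -> F) : Oct F := \row_(i < 8) f i.

Definition oct8 (c0 c1 c2 c3 c4 c5 c6 c7 : F) : Oct F :=
  oct_of (nth 0 [:: c0; c1; c2; c3; c4; c5; c6; c7]).

Lemma ocoord_oct_of f k : (k < 8)%N -> ocoord (oct_of f) k = f k.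
Proof. by move=> k8; rewrite /ocoord mxE inordK. Qed.

Lemma oct_coordP x y : (forall k, k < 8 -> ocoord x k = ocoord y k)%N -> x = y.
Proof.
by move=> eq_xy; apply/rowP=> i; have := eq_xy i (ltn_ord i); rewrite /ocoord inord_val.
Qed.

Lemma ocoordD x y k : ocoord (x + y) k = ocoord x k + ocoord y k.
Proof. by rewrite /ocoord mxE. Qed.
Lemma ocoordZ a x k : ocoord (a *: x) k = a * ocoord x k.
Proof. by rewrite /ocoord mxE. Qed.
Lemma ocoordN x k : ocoord (- x) k = - ocoord x k.
Proof. by rewrite /ocoord mxE. Qed.
Lemma ocoord0 k : ocoord 0 k = 0.
Proof. by rewrite /ocoord mxE. Qed.

Definition ocoordE := (ocoordD, ocoordZ, ocoordN, ocoord0).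

Lemma mkO_oct8 a (u v : 'rV[F]_3) b :
  mkO a u v b = oct8 a (u 0 (inord 0)) (u 0 (inord 1)) (u 0 (inord 2))
                       (v 0 (inord 0)) (v 0 (inord 1)) (v 0 (inord 2)) b.
Proof. by apply/rowP=> -[[|[|[|[|[|[|[|[|k]]]]]]]] //= k8]; rewrite !mxE. Qed.

Lemma oone_oct8 : oone F = oct8 1 0 0 0 0 0 0 1.
Proof. by rewrite /oone mkO_oct8 !mxE. Qed.
Lemma ou1_oct8 : ou_ F 1 = oct8 0 1 0 0 0 0 0 0.
Proof. by rewrite /ou_ mkO_oct8 /cvec !mxE !inordK. Qed.
Lemma ov2_oct8 : ov_ F 2 = oct8 0 0 0 0 0 1 0 0.
Proof. by rewrite /ov_ mkO_oct8 /cvec !mxE !inordK. Qed.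

Lemma dot3E (u v : 'rV[F]_3) :
  dot3 u v = u 0 (inord 0) * v 0 (inord 0) + u 0 (inord 1) * v 0 (inord 1)
             + u 0 (inord 2) * v 0 (inord 2).
Proof.
rewrite /dot3 !big_ord_recl big_ord0 addr0 addrA.
by congr (_ * _ + _ * _ + _ * _); congr (_ 0 _); apply: val_inj; rewrite /= inordK.
Qed.

Definition omul_coord (X Y : nat -> F) (k : nat) : F :=
  match k with
  | 0 => X 0%N * Y 0%N + (X 1%N * Y 4%N + X 2%N * Y 5%N + X 3%N * Y 6%N)
  | 1 => X 0%N * Y 1%N + Y 7%N * X 1%N - (X 5%N * Y 6%N - X 6%N * Y 5%N)
  | 2 => X 0%N * Y 2%N + Y 7%N * X 2%N - (X 6%N * Y 4%N - X 4%N * Y 6%N)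
  | 3 => X 0%N * Y 3%N + Y 7%N * X 3%N - (X 4%N * Y 5%N - X 5%N * Y 4%N)
  | 4 => Y 0%N * X 4%N + X 7%N * Y 4%N + (X 2%N * Y 3%N - X 3%N * Y 2%N)
  | 5 => Y 0%N * X 5%N + X 7%N * Y 5%N + (X 3%N * Y 1%N - X 1%N * Y 3%N)
  | 6 => Y 0%N * X 6%N + X 7%N * Y 6%N + (X 1%N * Y 2%N - X 2%N * Y 1%N)
  | _ => X 7%N * Y 7%N + (X 4%N * Y 1%N + X 5%N * Y 2%N + X 6%N * Y 3%N)
  end.

Lemma ocoord_omul x y k : (k < 8)%N ->
  ocoord (omul x y) k = omul_coord (ocoord x) (ocoord y) k.
Proof.
rewrite /omul mkO_oct8 => k8; rewrite ocoord_oct_of //.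
by case: k k8 => [|[|[|[|[|[|[|[|k]]]]]]]] //= _;
  rewrite ?dot3E !mxE ?dot3E /= ?mxE !inordK.
Qed.

End Coordinates.

Ltac oct_coordwise := apply: oct_coordP => -[|[|[|[|[|[|[|[|?]]]]]]]] // _.
Ltac oct_simpl :=
  repeat progress rewrite ?ocoordE ?ocoord_omul ?end_ofE ?ocoord_oct_of //=.
Ltac oct_ring := oct_coordwise; oct_simpl; ring.

Section OctonionLaws.
Variable F : fieldType.
Implicit Types (x y z : Oct F) (a : F).

Lemma omulDl x y z : omul (x + y) z = omul x z + omul y z.
Proof. by oct_ring. Qed.
Lemma omulDr x y z : omul x (y + z) = omul x y + omul x z.
Proof. by oct_ring. Qed.
Lemma omulZl a x y : omul (a *: x) y = a *: omul x y.
Proof. by oct_ring. Qed.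
Lemma omulZr a x y : omul x (a *: y) = a *: omul x y.
Proof. by oct_ring. Qed.
Lemma omul0l y : omul 0 y = 0.
Proof. by oct_ring. Qed.
Lemma omulNr x y : omul x (- y) = - omul x y.
Proof. by oct_ring. Qed.
Lemma omul_alt x y : omul x (omul x y) = omul (omul x x) y.
Proof. by oct_ring. Qed.
Lemma omul1l x : omul (oone F) x = x.
Proof. by rewrite oone_oct8; oct_ring. Qed.
Lemma omul1r x : omul x (oone F) = x.
Proof. by rewrite oone_oct8; oct_ring. Qed.

Lemma oone_neq0 : oone F != 0.
Proof.
apply/eqP=> /(congr1 (@ocoord F ^~ 0%N)); rewrite oone_oct8 ocoord_oct_of // ocoord0.
exact/eqP/oner_neq0.
Qed.

Definition onorm x : F :=
  ocoord x 0 * ocoord x 7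
  - (ocoord x 1 * ocoord x 4 + ocoord x 2 * ocoord x 5 + ocoord x 3 * ocoord x 6).

Lemma otrE x : otr x = ocoord x 0 + ocoord x 7.
Proof. by []. Qed.

Lemma omul_sq x : omul x x = otr x *: x - onorm x *: oone F.
Proof. by rewrite otrE /onorm oone_oct8; oct_ring. Qed.

Lemma square_zero_trace_norm x : x != 0 -> omul x x = 0 -> otr x = 0 /\ onorm x = 0.
Proof.
move=> x0 xx; have /eqP := omul_sq x.
rewrite xx eq_sym subr_eq0 => /eqP tr_norm.
have tr0 : otr x = 0.
  apply: contraTeq x0 => tr_neq0; rewrite negbK.
  have x_scalar : x = (onorm x / otr x) *: oone F.
    by rewrite mulrC -scalerA -tr_norm scalerA mulVf // scale1r.
  move: xx; rewrite x_scalar omulZl omulZr omul1l scalerA => /eqP.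
  by rewrite scaler_eq0 (negbTE oone_neq0) orbF mulf_eq0 orbb => /eqP->; rewrite scale0r.
split=> //; move/esym/eqP: tr_norm; rewrite tr0 scale0r scaler_eq0.
by rewrite (negbTE oone_neq0) orbF => /eqP.
Qed.

End OctonionLaws.

Lemma square_zero_shift (F : closedFieldType) (x : Oct F) :
  2%N \in [pchar F] -> otr x = 0 ->
  exists r, omul (x + r *: oone F) (x + r *: oone F) = 0.
Proof.
move=> char2 tr0; have [r r2] := closed_sqrt (onorm x); exists r.
rewrite omulDl !omulDr !omulZl !omulZr !omul1l omul1r -!addrA (addrA (r *: x)).
rewrite -scalerDl addrr_pchar2 // scale0r add0r.
by rewrite omul_sq tr0 scale0r sub0r scalerA -expr2 r2 addNr.
Qed.

Section G2.
Variable F : fieldType.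
Implicit Types (g h : 'End(Oct F)) (w x y z : Oct F).

Lemma G2_id : isG2 (\1%VF : 'End(Oct F)).
Proof.
split=> [|x y]; last by rewrite !id_lfunE.
by apply/eqP/lker0P=> x y; rewrite !id_lfunE.
Qed.

Lemma G2_comp g h : isG2 g -> isG2 h -> isG2 (h \o g)%VF.
Proof.
move=> [/eqP/lker0P g_inj g_mul] [/eqP/lker0P h_inj h_mul].
split=> [|x y]; last by rewrite !comp_lfunE g_mul h_mul.
by apply/eqP/lker0P=> x y; rewrite !comp_lfunE => /h_inj/g_inj.
Qed.

Lemma G2_inj g : isG2 g -> injective g.
Proof. by case=> /eqP/lker0P. Qed.

Lemma G2_unit g : isG2 g -> g (oone F) = oone F.
Proof.
case=> /eqP g_ker0 g_mul; have g_onto := lker0_lfunVK g_ker0 (oone F).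
by rewrite -{2}g_onto -[g^-1%VF _]omul1l g_mul g_onto omul1r.
Qed.

Lemma G2_unit_img g (A : {vspace Oct F}) :
  isG2 g -> (oone F \in (g @: A)%VS) = (oone F \in A).
Proof.
move=> gG; apply/memv_imgP/idP=> [[x xA] | oneA]; last by exists (oone F); rewrite ?G2_unit.
by rewrite -{1}(G2_unit gG) => /(G2_inj gG) ->.
Qed.

Lemma G2_end_of f f' (f_lin : linear f) :
  (forall x y, f (omul x y) = omul (f x) (f y)) -> cancel f f' -> isG2 (end_of f_lin).
Proof.
move=> f_mul fK; split=> [|x y]; last by rewrite !end_ofE.
by apply/eqP/lker0P=> x y; rewrite !end_ofE => /(can_inj fK).
Qed.

Definition flip_fun x : Oct F :=
  let c := ocoord x in
  oct8 (c 7%N) (- c 4%N) (- c 5%N) (- c 6%N) (- c 1%N) (- c 2%N) (- c 3%N) (c 0%N).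

Definition shear_fun (a1 a2 a3 : F) x : Oct F :=
  let c := ocoord x in
  let s := a1 * c 4%N + a2 * c 5%N + a3 * c 6%N in
  oct8 (c 0%N + s)
       (c 1%N + (c 7%N - c 0%N - s) * a1) (c 2%N + (c 7%N - c 0%N - s) * a2)
       (c 3%N + (c 7%N - c 0%N - s) * a3)
       (c 4%N - (a2 * c 3%N - a3 * c 2%N)) (c 5%N - (a3 * c 1%N - a1 * c 3%N))
       (c 6%N - (a1 * c 2%N - a2 * c 1%N))
       (c 7%N - s).

(* The elementary matrix u_j += t u_i of SL_3, acting on v by its inverse
   transpose; it is an automorphism when 1 <= i, j <= 3 and i != j. *)
Definition transv_fun (i j : nat) (t : F) x : Oct F :=
  let c := ocoord x in
  oct_of (fun k => if k == j then c k + t * c i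
                   else if k == i.+3 then c k - t * c j.+3 else c k).

Lemma flip_lin : linear flip_fun.
Proof. by move=> a x y; oct_ring. Qed.
Lemma shear_lin a1 a2 a3 : linear (shear_fun a1 a2 a3).
Proof. by move=> a x y; oct_ring. Qed.
Lemma transv_lin i j t : linear (transv_fun i j t).
Proof. by move=> a x y; oct_coordwise; oct_simpl; do 2?case: ifP => _; ring. Qed.

Definition flip := end_of flip_lin.
Definition shear a1 a2 a3 := end_of (shear_lin a1 a2 a3).
Definition transv i j t := end_of (transv_lin i j t).

Lemma G2_flip : isG2 flip.
Proof. by apply: (G2_end_of (f' := flip_fun)) => [x y|x]; oct_ring. Qed.

Lemma G2_shear a1 a2 a3 : isG2 (shear a1 a2 a3).
Proof.
by apply: (G2_end_of (f' := shear_fun (- a1) (- a2) (- a3))) => [x y|x]; oct_ring.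
Qed.

Lemma G2_transv i j t : i \in [:: 1; 2; 3]%N -> j \in [:: 1; 2; 3]%N -> i != j ->
  isG2 (transv i j t).
Proof.
move=> i_ok j_ok ij; apply: (G2_end_of (f' := transv_fun i j (- t))) => [x y|x];
  move: i_ok j_ok ij; rewrite !inE => /or3P[] /eqP-> /or3P[] /eqP-> // _;
  by oct_ring.
Qed.

Definition G2_moves w y z : Prop := exists g, [/\ isG2 g, g w = w & g y = z].

Lemma G2_moves_refl w y : G2_moves w y y.
Proof. by exists \1%VF; rewrite !id_lfunE; split; first exact: G2_id. Qed.

Lemma G2_moves_trans w x y z : G2_moves w x y -> G2_moves w y z -> G2_moves w x z.
Proof.
move=> [g [gG gw gx]] [h [hG hw hy]]; exists (h \o g)%VF.
by rewrite !comp_lfunE gw hw gx hy; split; first exact: G2_comp.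
Qed.

Lemma G2_moves_unit g y : isG2 g -> G2_moves (oone F) y (g y).
Proof. by move=> gG; exists g; rewrite G2_unit. Qed.

Lemma G2_moves_square_zero w y z :
  G2_moves w y z -> y != 0 -> omul y y = 0 -> z != 0 /\ omul z z = 0.
Proof.
move=> [g [gG _ <-]] y0 yy; split; last by case: gG => _ <-; rewrite yy linear0.
by apply: contra y0 => /eqP gy0; apply/eqP/(G2_inj gG); rewrite gy0 linear0.
Qed.

End G2.

Arguments flip {F}.

Section SquareZeroOrbit.
Variable F : fieldType.
Implicit Types (y z : Oct F).

Lemma G2_moves_trace_free y : y != 0 -> omul y y = 0 ->
  exists2 z, G2_moves (oone F) y z & ocoord z 0 = 0 /\ ocoord z 7 = 0.
Proof.
move=> y0 yy; have [] := square_zero_trace_norm y0 yy; rewrite otrE /onorm => tr0 n0.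
have y7 : ocoord y 7 = - ocoord y 0 by apply/eqP; rewrite -addr_eq0 addrC tr0.
case: (boolP [|| ocoord y 4 != 0, ocoord y 5 != 0 | ocoord y 6 != 0]) => [v_neq0 | ].
  have [a1 [a2 [a3 av]]] := exists_dot3 (- ocoord y 0) v_neq0.
  exists (shear a1 a2 a3 y); first exact/G2_moves_unit/G2_shear.
  by oct_simpl; rewrite av y7; split; ring.
rewrite !negb_or !negbK => /and3P[/eqP v1 /eqP v2 /eqP v3].
exists y; first exact: G2_moves_refl.
move: n0; rewrite v1 v2 v3 !mulr0 !addr0 subr0 y7 mulrN => /eqP.
by rewrite oppr_eq0 mulf_eq0 orbb => /eqP alpha0; rewrite alpha0 oppr0.
Qed.

Lemma G2_moves_u_neq0 y : y != 0 -> ocoord y 0 = 0 -> ocoord y 7 = 0 ->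
  exists2 z, G2_moves (oone F) y z & [/\ ocoord z 0 = 0, ocoord z 7 = 0
    & [|| ocoord z 1 != 0, ocoord z 2 != 0 | ocoord z 3 != 0]].
Proof.
move=> y0 alpha0 beta0.
case: (boolP [|| ocoord y 1 != 0, ocoord y 2 != 0 | ocoord y 3 != 0]) => [u_neq0 | ].
  by exists y; first exact: G2_moves_refl.
rewrite !negb_or !negbK => /and3P[/eqP u1 /eqP u2 /eqP u3].
exists (flip y); first exact/G2_moves_unit/G2_flip.
oct_simpl; rewrite alpha0 beta0 !oppr_eq0; split=> //.
apply: contraR y0; rewrite !negb_or !negbK => /and3P[/eqP v1 /eqP v2 /eqP v3].
by apply/eqP; oct_coordwise; rewrite ocoord0.
Qed.

Lemma G2_moves_u_e1 y : ocoord y 0 = 0 -> ocoord y 7 = 0 ->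
  [|| ocoord y 1 != 0, ocoord y 2 != 0 | ocoord y 3 != 0] ->
  exists2 z, G2_moves (oone F) y z &
    [/\ ocoord z 0 = 0, ocoord z 7 = 0, ocoord z 1 = 1, ocoord z 2 = 0 & ocoord z 3 = 0].
Proof.
move=> alpha0 beta0 u_neq0.
pose R p q p' q' := forall y, ocoord y 0 = 0 -> ocoord y 7 = 0 ->
  ocoord y 1 = p -> ocoord y 2 = q ->
  exists2 z, G2_moves (oone F) y z & [/\ ocoord z 0 = 0, ocoord z 7 = 0,
    ocoord z 1 = p', ocoord z 2 = q' & ocoord z 3 = ocoord y 3].
have R_e1 : forall p q, (p != 0) || (q != 0) -> R p q 1 0.
  apply: SL2_moves_to_e1.
  - move=> p q p' q' p'' q'' R1 R2 x x0 x7 xp xq.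
    have [x' xx' [x'0 x'7 x'p x'q x'3]] := R1 x x0 x7 xp xq.
    have [z x'z [z0 z7 zp zq z3]] := R2 x' x'0 x'7 x'p x'q.
    by exists z; [exact: G2_moves_trans xx' x'z | rewrite z3 x'3].
  - move=> p q t x x0 x7 xp xq; exists (transv 1 2 t x).
      exact/G2_moves_unit/G2_transv.
    by oct_simpl; rewrite x0 x7 xp xq.
  - move=> p q t x x0 x7 xp xq; exists (transv 2 1 t x).
      exact/G2_moves_unit/G2_transv.
    by oct_simpl; rewrite x0 x7 xp xq.
have [y' yy' [y'0 y'7 y'12]] : exists2 y', G2_moves (oone F) y y' &
    [/\ ocoord y' 0 = 0, ocoord y' 7 = 0 & (ocoord y' 1 != 0) || (ocoord y' 2 != 0)].
  case: (boolP ((ocoord y 1 != 0) || (ocoord y 2 != 0))) => [u12 | ].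
    by exists y; first exact: G2_moves_refl.
  move: u_neq0; rewrite orbA => /orP[-> // | u3 /norP[/negPn/eqP u1 _]].
  exists (transv 3 1 1 y); first exact/G2_moves_unit/G2_transv.
  by oct_simpl; rewrite alpha0 beta0 u1 mul1r add0r u3.
have [z y'z [z0 z7 z1 z2 _]] := R_e1 _ _ y'12 y' y'0 y'7 erefl erefl.
exists (transv 1 3 (- ocoord z 3) z).
  apply: (G2_moves_trans yy'); apply: (G2_moves_trans y'z).
  exact/G2_moves_unit/G2_transv.
by oct_simpl; rewrite z0 z7 z1 z2 mulr1 subrr.
Qed.

Lemma G2_moves_e1_u1 z : omul z z = 0 ->
  [/\ ocoord z 0 = 0, ocoord z 7 = 0, ocoord z 1 = 1, ocoord z 2 = 0 & ocoord z 3 = 0] ->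
  G2_moves (oone F) z (ou_ F 1).
Proof.
move=> zz [z0 z7 z1 z2 z3].
have z4 : ocoord z 4 = 0.
  have := congr1 (@ocoord F ^~ 0%N) zz; rewrite ocoord_omul // ocoord0 /=.
  by rewrite z0 z1 z2 z3 !mul0r mul1r !addr0 add0r.
have -> : ou_ F 1 = shear 0 (- ocoord z 6) (ocoord z 5) z.
  by rewrite ou1_oct8; oct_coordwise; oct_simpl; rewrite ?z0 ?z7 ?z1 ?z2 ?z3 ?z4; ring.
exact/G2_moves_unit/G2_shear.
Qed.

Lemma square_zero_G2_moves_u1 y : y != 0 -> omul y y = 0 -> G2_moves (oone F) y (ou_ F 1).
Proof.
move=> y0 yy.
have [y1 yy1 [y1_alpha y1_beta]] := G2_moves_trace_free y0 yy.
have [y1_neq0 _] := G2_moves_square_zero yy1 y0 yy.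
have [y2 y12 [y2_alpha y2_beta y2_u]] := G2_moves_u_neq0 y1_neq0 y1_alpha y1_beta.
have [y3 y23 y3_e1] := G2_moves_u_e1 y2_alpha y2_beta y2_u.
have yy3 := G2_moves_trans yy1 (G2_moves_trans y12 y23).
have [_ y3y3] := G2_moves_square_zero yy3 y0 yy.
exact: G2_moves_trans yy3 (G2_moves_e1_u1 y3y3 y3_e1).
Qed.

End SquareZeroOrbit.

Section StabiliserU1.
Variable F : fieldType.

Lemma G2_moves_v23_v2 p q : (p != 0) || (q != 0) ->
  G2_moves (ou_ F 1) (oct8 0 0 0 0 0 p q 0) (ov_ F 2).
Proof.
rewrite ov2_oct8; apply: (SL2_moves_to_e1 (R := fun p q p' q' =>
  G2_moves (ou_ F 1) (oct8 0 0 0 0 0 p q 0) (oct8 0 0 0 0 0 p' q' 0))).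
- by move=> *; apply: G2_moves_trans; eassumption.
- move=> p' q' t; exists (transv 3 2 (- t)); split; first exact: G2_transv.
  + by rewrite ou1_oct8; oct_ring.
  + by oct_ring.
- move=> p' q' t; exists (transv 2 3 (- t)); split; first exact: G2_transv.
  + by rewrite ou1_oct8; oct_ring.
  + by oct_ring.
Qed.

Lemma u1_annihilator b : omul (ou_ F 1) b = 0 -> omul b (ou_ F 1) = 0 ->
  b = ocoord b 1 *: ou_ F 1 + oct8 0 0 0 0 0 (ocoord b 5) (ocoord b 6) 0.
Proof.
rewrite ou1_oct8 => ub bu.
move: (congr1 (@ocoord F ^~ 1%N) bu) (congr1 (@ocoord F ^~ 1%N) ub).
move: (congr1 (@ocoord F ^~ 0%N) ub) (congr1 (@ocoord F ^~ 5%N) ub).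
move: (congr1 (@ocoord F ^~ 6%N) ub).
oct_simpl; rewrite !(mul0r, mulr0, mul1r, mulr1, addr0, add0r, subr0, sub0r, oppr0).
move=> b2 b4 /eqP; rewrite oppr_eq0 => /eqP b3 b7 b0.
by oct_coordwise; oct_simpl; rewrite ?b0 ?b2 ?b3 ?b4 ?b7; ring.
Qed.

Lemma G2_moves_u1_annihilator b : omul (ou_ F 1) b = 0 -> omul b (ou_ F 1) = 0 ->
  b \notin <[ou_ F 1]>%VS -> G2_moves (ou_ F 1) (b - ocoord b 1 *: ou_ F 1) (ov_ F 2).
Proof.
move=> ub bu b_notin; rewrite {1}(u1_annihilator ub bu) addrC addKr.
apply: G2_moves_v23_v2; apply: contraR b_notin; rewrite negb_or !negbK.
case/andP=> /eqP p0 /eqP q0; rewrite (u1_annihilator ub bu) p0 q0.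
suff -> : oct8 0 0 0 0 0 0 0 0 = 0 :> Oct F by rewrite addr0 memvZ ?memv_line.
by oct_coordwise; oct_simpl.
Qed.

End StabiliserU1.

Lemma unital_square_zero (F : closedFieldType) (A : {vspace Oct F}) :
  2%N \in [pchar F] -> in_O0 A -> oone F \in A -> (2 <= \dim A)%N ->
  exists2 y, y \in A & y != 0 /\ omul y y = 0.
Proof.
move=> char2 A_O0 oneA dimA; have [x xA x_notin] := memv_notin_line (oone F) dimA.
have [r rr] := square_zero_shift char2 (A_O0 x xA).
exists (x + r *: oone F); first by rewrite memvD ?memvZ.
split=> //; apply: contraNneq x_notin => /eqP; rewrite addr_eq0 => /eqP->.
by rewrite memvN memvZ ?memv_line.
Qed.

Section NonUnital.
Variables (F : fieldType) (A : {vspace Oct F}).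
Hypotheses (A_sub : is_subalgebra A) (A_O0 : in_O0 A) (one_notin_A : oone F \notin A).

Lemma nonunital_square_zero x : x \in A -> omul x x = 0.
Proof.
move=> xA; have := omul_sq x; rewrite (A_O0 xA) scale0r sub0r => xx.
have [n0 | n_neq0] := eqVneq (onorm x) 0; first by rewrite xx n0 scale0r oppr0.
case/negP: one_notin_A.
suff -> : oone F = - (onorm x)^-1 *: omul x x by rewrite memvZ ?A_sub.
by rewrite xx scalerN scaleNr opprK scalerA mulVf // scale1r.
Qed.

Lemma nonunital_anticomm x y : x \in A -> y \in A -> omul y x = - omul x y.
Proof.
move=> xA yA; have := nonunital_square_zero (memvD xA yA).
rewrite omulDl !omulDr !nonunital_square_zero // add0r addr0 => /eqP.
by rewrite addrC addr_eq0 => /eqP.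
Qed.

Lemma nonunital_annihilating_pair : (2 <= \dim A)%N ->
  exists a b, [/\ a \in A, b \in A, a != 0, b \notin <[a]>%VS
                & omul a b = 0 /\ omul b a = 0].
Proof.
move=> dimA; have [x xA x_notin0] := memv_notin_line 0 dimA.
have x0 : x != 0 by apply: contraNneq x_notin0 => ->; exact: mem0v.
have [y yA y_notin] := memv_notin_line x dimA.
have [xy0 | xy_neq0] := eqVneq (omul x y) 0.
  by exists x, y; split=> //; split=> //; rewrite nonunital_anticomm // xy0 oppr0.
have xxy : omul x (omul x y) = 0 by rewrite omul_alt nonunital_square_zero // omul0l.
exists x, (omul x y); split=> //; first exact: A_sub.
  apply/vlineP=> -[l xy_l]; move: xy_neq0; rewrite xy_l.
  have : omul y (omul x y) = - (l * l) *: x.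
    by rewrite {1}xy_l omulZr (nonunital_anticomm xA yA) xy_l scalerN scalerA scaleNr.
  rewrite (nonunital_anticomm yA xA) omulNr omul_alt nonunital_square_zero // omul0l.
  move/esym/eqP; rewrite oppr0 scaler_eq0 oppr_eq0 mulf_eq0 orbb (negbTE x0) orbF.
  by move/eqP->; rewrite scale0r eqxx.
by split=> //; rewrite nonunital_anticomm ?A_sub // xxy oppr0.
Qed.

End NonUnital.

Theorem lemma6p8 (F : closedFieldType) (hchar : 2%N \in [pchar F])
    (A : {vspace Oct F}) (hsub : is_subalgebra A) (hO0 : in_O0 A)
    (hdim : (2 <= \dim A)%N) :
  exists g : 'End(Oct F), isG2 g /\
    ((oone F \in (g @: A)%VS /\ ou_ F 1 \in (g @: A)%VS) \/
     (ou_ F 1 \in (g @: A)%VS /\ ov_ F 2 \in (g @: A)%VS /\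
      oone F \notin (g @: A)%VS)).
Proof.
have [oneA | one_notinA] := boolP (oone F \in A).
  have [y yA [y0 yy]] := unital_square_zero hchar hO0 oneA hdim.
  have [g [gG _ <-]] := square_zero_G2_moves_u1 y0 yy.
  by exists g; split=> //; left; rewrite G2_unit_img ?memv_img.
have [a [b [aA bA a0 b_notin [ab ba]]]] :=
  nonunital_annihilating_pair hsub hO0 one_notinA hdim.
have [g [gG _ ga]] :=
  square_zero_G2_moves_u1 a0 (nonunital_square_zero hsub hO0 one_notinA aA).
have [g_ker0 g_mul] := gG.
have u1_gb : omul (ou_ F 1) (g b) = 0 by rewrite -ga -g_mul ab linear0.
have gb_u1 : omul (g b) (ou_ F 1) = 0 by rewrite -ga -g_mul ba linear0.
have gb_notin : g b \notin <[ou_ F 1]>%VS.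
  by rewrite -ga memvE -!limg_line limg_ker0 -?memvE ?g_ker0.
have [h [hG hu hv]] := G2_moves_u1_annihilator u1_gb gb_u1 gb_notin.
have hgG := G2_comp gG hG.
exists (h \o g)%VF; split=> //; right; rewrite G2_unit_img // one_notinA.
split; [|split=> //]; apply/memv_imgP.
- by exists a => //; rewrite comp_lfunE ga hu.
- exists (b - ocoord (g b) 1 *: a); first by rewrite memvB ?memvZ.
  by rewrite comp_lfunE linearB linearZ /= ga.
Qed.
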